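(* Let $0<A<1$ and define $g:\mathbb{R}\to\mathbb{R}$ by $g(x)=Ax+\log\big(1+A(e^{-x}-1)\big)$ and $f(x)=g(x)/x^2$ for $x\ne0$. Let $B$ be a nonnegative constant with $B>\log\big(\tfrac{A}{1-A}\big)$. Then for all $0<x\le B$, $$g(x)\ge\min\Big\{\lim_{y\to0}f(y),\,f(B)\Big\}\cdot x^2.$$ *)

From Stdlib Require Import Reals.
From Coquelicot Require Import Coquelicot.
Open Scope R_scope.

Definition gF (A x : R) : R := A * x + ln (1 + A * (exp (- x) - 1)).

(* f(x) = g(x) / x^2  (only meaningful for x <> 0; the limit below is the
   punctured limit, so the junk value at 0 is irrelevant) *)
Definition fF (A x : R) : R := gF A x / x ^ 2.

From Stdlib Require Import Reals Lra.
From Coquelicot Require Import Coquelicot.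
Open Scope R_scope.

(* Write g(x) = ln(A + (1-A) e^x) - (1-A) x.  Then f = g / x^2 has f' = h / x^3
   with h = x g' - 2 g, h' = x g'' - g' and h'' = x g''', and g''' has the sign
   of A - (1-A) e^x, which is decreasing.  As h and h' vanish at 0, the mean
   value theorem passes "once nonpositive on (0, +oo), nonpositive from then on"
   from h'' to h' to h, hence to f'.  So f increases and then decreases on
   (0, +oo), and on (0, B] it is bounded below by the smaller of its values at
   the two ends, the one at 0 being the limit. *)

Lemma mean_value (f f' : R -> R) (a b : R) : a < b ->
  (forall c, a <= c <= b -> is_derive f c (f' c)) ->
  exists c, a < c < b /\ f b - f a = f' c * (b - a).
Proof.
intros hab hf.
destruct (MVT_cor2 f f' a b hab) as [c [hc1 hc2]].
- intros c hc; apply is_derive_Reals, hf, hc.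
- now exists c.
Qed.

(* [0 <= M] is needed because [real] sends an infinite limit to 0. *)
Lemma Lim_right_le (f : R -> R) (a d M : R) : 0 < d -> 0 <= M ->
  (forall t, a < t < a + d -> f t <= M) -> real (Lim f a) <= M.
Proof.
intros hd hM hf.
assert (hle : Rbar_le (Lim f a) (Lim_seq (fun _ => M))).
{ apply Lim_seq_le_loc.
  destruct (archimed_cor1 d hd) as [N [hN hN0]].
  exists N; intros n hn; apply hf; simpl.
  assert (hn1 : 0 < INR n + 1) by (pose proof (pos_INR n); lra).
  assert (/ (INR n + 1) < / INR N).
  { apply Rinv_lt_contravar.
    - apply Rmult_lt_0_compat; [apply lt_0_INR, hN0 | lra].
    - apply le_INR in hn; lra. }
  pose proof (Rinv_0_lt_compat _ hn1); lra. }
rewrite Lim_seq_const in hle.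
destruct (Lim f a); simpl in *; easy.
Qed.

Definition stays_nonpos (phi : R -> R) : Prop :=
  forall s t, 0 < s <= t -> phi s <= 0 -> phi t <= 0.

Lemma stays_nonpos_nonincreasing (q : R -> R) :
  (forall s t, 0 < s <= t -> q t <= q s) -> stays_nonpos q.
Proof. intros hq s t hst hs; specialize (hq s t hst); lra. Qed.

Lemma stays_nonpos_mul_pos (phi p q : R -> R) :
  (forall x, 0 < x -> phi x = p x * q x) -> (forall x, 0 < x -> 0 < p x) ->
  stays_nonpos q -> stays_nonpos phi.
Proof.
intros hphi hp hq s t hst hs.
rewrite hphi in hs |- *; try lra.
assert (hps := hp s ltac:(lra)); assert (hpt := hp t ltac:(lra)).
assert (q s <= 0) by nra.
assert (q t <= 0) by (apply (hq s t); assumption).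
nra.
Qed.

Lemma stays_nonpos_antiderivative (phi psi : R -> R) : phi 0 = 0 ->
  (forall x, 0 <= x -> is_derive phi x (psi x)) ->
  stays_nonpos psi -> stays_nonpos phi.
Proof.
intros h0 hd hpsi s t [hs hst] hphi.
destruct (mean_value phi psi 0 s hs) as [c [hc hphic]].
{ intros c hc; apply hd; lra. }
assert (psi c <= 0) by (rewrite h0 in hphic; nra).
destruct (Rle_lt_or_eq_dec s t hst) as [lt | <-]; [| assumption].
destruct (mean_value phi psi s t lt) as [d [hd' hphid]].
{ intros d hd'; apply hd; lra. }
assert (psi d <= 0) by (apply (hpsi c d); [lra | assumption]).
nra.
Qed.

Lemma Rmin_le_unimodal (F F' : R -> R) :
  (forall x, 0 < x -> is_derive F x (F' x)) -> stays_nonpos F' ->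
  forall t x b, 0 < t < x -> x < b -> Rmin (F t) (F b) <= F x.
Proof.
intros hF hF' t x b [ht htx] hxb.
apply Rnot_lt_le; intros hmin.
assert (hFt : F x < F t) by (eapply Rlt_le_trans; [exact hmin | apply Rmin_l]).
assert (hFb : F x < F b) by (eapply Rlt_le_trans; [exact hmin | apply Rmin_r]).
destruct (mean_value F F' t x htx) as [c [hc hFc]].
{ intros c hc; apply hF; lra. }
destruct (mean_value F F' x b hxb) as [d [hd hFd]].
{ intros d hd; apply hF; lra. }
assert (F' d <= 0) by (apply (hF' c d); [lra | nra]).
nra.
Qed.

Section Unimodality.

Variable A : R.
Hypothesis hA0 : 0 < A.
Hypothesis hA1 : A < 1.

Let u x := A + (1 - A) * exp x.

Lemma u_pos x : 0 < u x.
Proof. unfold u; pose proof (exp_pos x); nra. Qed.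

Let g x := ln (u x) - (1 - A) * x.
Let g' x := (1 - A) * exp x / u x - (1 - A).
Let g'' x := A * (1 - A) * exp x / u x ^ 2.
Let g''' x := A * (1 - A) * exp x * (A - (1 - A) * exp x) / u x ^ 3.
Let h x := x * g' x - 2 * g x.
Let h' x := x * g'' x - g' x.

Ltac derive_in_u x :=
  pose proof (u_pos x); unfold u in *; auto_derive;
  repeat split; try nra; field; lra.

Lemma is_derive_g x : is_derive g x (g' x).
Proof. unfold g, g'; derive_in_u x. Qed.

Lemma is_derive_h x : is_derive h x (h' x).
Proof. unfold h, h', g, g', g''; derive_in_u x. Qed.

Lemma is_derive_h' x : is_derive h' x (x * g''' x).
Proof. unfold h', g', g'', g'''; derive_in_u x. Qed.

Lemma is_derive_g_div_sqr x : 0 < x ->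
  is_derive (fun y => g y / y ^ 2) x (h x / x ^ 3).
Proof. intros hx; unfold h, g, g'; derive_in_u x. Qed.

Lemma g0 : g 0 = 0.
Proof. unfold g, u; rewrite exp_0, Rmult_1_r, Rplus_minus, ln_1; ring. Qed.

Lemma g'0 : g' 0 = 0.
Proof. unfold g', u; rewrite exp_0; field; lra. Qed.

Lemma g'_nonneg x : 0 <= x -> 0 <= g' x.
Proof.
intros hx; pose proof (u_pos x); unfold g', u in *.
assert (1 <= exp x) by (pose proof (exp_ineq1_le x); lra).
replace ((1 - A) * exp x / (A + (1 - A) * exp x) - (1 - A))
  with (A * (1 - A) * (exp x - 1) / (A + (1 - A) * exp x)) by (field; lra).
apply Rdiv_le_0_compat; [| lra].
assert (0 < A * (1 - A)) by nra; nra.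
Qed.

Lemma g_nonneg x : 0 < x -> 0 <= g x.
Proof.
intros hx.
destruct (mean_value g g' 0 x hx) as [c [hc hgc]].
{ intros c _; apply is_derive_g. }
rewrite g0 in hgc; pose proof (g'_nonneg c ltac:(lra)); nra.
Qed.

Lemma stays_nonpos_h : stays_nonpos h.
Proof.
apply (stays_nonpos_antiderivative h h');
  [unfold h; rewrite g0; ring | intros x _; apply is_derive_h |].
apply (stays_nonpos_antiderivative h' (fun x => x * g''' x));
  [unfold h'; rewrite g'0; ring | intros x _; apply is_derive_h' |].
apply (stays_nonpos_mul_pos _ (fun x => x * A * (1 - A) * exp x / u x ^ 3)
  (fun x => A - (1 - A) * exp x)).
- intros x _; unfold g'''; pose proof (u_pos x); field; lra.
- intros x hx; pose proof (u_pos x); pose proof (exp_pos x).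
  apply Rdiv_lt_0_compat; [repeat apply Rmult_lt_0_compat | apply pow_lt]; lra.
- apply stays_nonpos_nonincreasing; intros s t hst.
  assert (exp s <= exp t).
  { destruct (Rle_lt_or_eq_dec s t) as [lt | <-]; [lra | | lra].
    left; apply exp_increasing, lt. }
  nra.
Qed.

Lemma gF_eq x : gF A x = g x.
Proof.
pose proof (u_pos x); pose proof (exp_pos x); unfold gF, g, u in *.
replace (1 + A * (exp (- x) - 1)) with ((A + (1 - A) * exp x) * exp (- x))
  by (rewrite exp_Ropp; field; lra).
rewrite ln_mult, ln_exp by (lra || apply exp_pos); ring.
Qed.

Lemma fF_nonneg x : 0 < x -> 0 <= fF A x.
Proof.
intros hx; unfold fF; rewrite gF_eq.
apply Rdiv_le_0_compat; [apply g_nonneg | apply pow_lt]; lra.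
Qed.

Lemma fF_unimodal t x b : 0 < t < x -> x < b ->
  Rmin (fF A t) (fF A b) <= fF A x.
Proof.
unfold fF; rewrite !gF_eq.
apply (Rmin_le_unimodal (fun y => g y / y ^ 2) (fun y => h y / y ^ 3)).
- apply is_derive_g_div_sqr.
- apply (stays_nonpos_mul_pos _ (fun y => / y ^ 3) h).
  + intros y hy; unfold Rdiv; ring.
  + intros y hy; apply Rinv_0_lt_compat, pow_lt, hy.
  + exact stays_nonpos_h.
Qed.

End Unimodality.

Theorem lemmaF2 (A B : R) (hA0 : 0 < A) (hA1 : A < 1)
  (hB0 : 0 <= B) (hB : ln (A / (1 - A)) < B) :
  forall x : R, 0 < x <= B ->
    gF A x >= Rmin (real (Lim (fF A) 0)) (fF A B) * x ^ 2.
Proof.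
intros x [hx hxB].
assert (hx2 : 0 < x ^ 2) by (apply pow_lt; lra).
replace (gF A x) with (fF A x * x ^ 2) by (unfold fF; field; lra).
apply Rle_ge, Rmult_le_compat_r; [lra |].
destruct (Rle_or_lt (fF A B) (fF A x)) as [hBx | hxB'].
- eapply Rle_trans; [apply Rmin_r | exact hBx].
- eapply Rle_trans; [apply Rmin_l |].
  apply (Lim_right_le _ 0 x); [lra | apply fF_nonneg; lra |].
  intros t ht.
  assert (hxltB : x < B) by (destruct (Req_dec x B); subst; lra).
  generalize (fF_unimodal A hA0 hA1 t x B ltac:(lra) hxltB).
  unfold Rmin; destruct (Rle_dec _ _); lra.
Qed.
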